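(* Let $k$ be an algebraically closed field of characteristic $0$, let $G,G'$ be finite groups, and $J$, $J'$ twists for $k[G]$, $k[G']$ respectively. Suppose that the triangular Hopf algebras $(k[G]^J,J_{21}^{-1}J)$ and $(k[G']^{J'},J'^{-1}_{21}J')$ are isomorphic. Then there exists a group isomorphism $\phi:G\to G'$ such that $(\phi\otimes\phi)(J)$ is gauge equivalent to $J'$.
   Context: A twist for a Hopf algebra $A$ is an invertible $J\in A\otimes A$ with $(\Delta\otimes\mathrm{id})(J)(J\otimes 1)=(\mathrm{id}\otimes\Delta)(J)(1\otimes J)$ and $(\varepsilon\otimes\mathrm{id})(J)=(\mathrm{id}\otimes\varepsilon)(J)=1$. $A^J$ is the Hopf algebra with the same algebra and counit, coproduct $\Delta^J(x)=J^{-1}\Delta(x)J$ and antipode $S^J(x)=Q^{-1}S(x)Q$, $Q=m\circ(S\otimes\mathrm{id})(J)$; $(k[G]^J,J_{21}^{-1}J)$ is triangular, $J_{21}=\tau(J)$. An isomorphism of triangular Hopf algebras $(A,R)\to(A',R')$ is a Hopf algebra isomorphism $f$ with $(f\otimes f)(R)=R'$. Twists $J_1,J_2$ are gauge equivalent if $J_2=\Delta(x)J_1(x^{-1}\otimes x^{-1})$ for some invertible $x$ with $\varepsilon(x)=1$. *)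

From mathcomp Require Import all_boot all_algebra all_fingroup.
Set Implicit Arguments. Unset Strict Implicit. Unset Printing Implicit Defensive.
Import GRing.Theory.
Local Open Scope ring_scope.

(* Group algebra k[T] (T finite, with a multiplication m and unit e),
   represented by coefficient functions: a = \sum_g a g * g. *)
Section Conv.
Variables (k : fieldType) (T : finType) (m : T -> T -> T) (e : T).
Definition conv (a b : {ffun T -> k}) : {ffun T -> k} :=
  [ffun g => \sum_(x : T) \sum_(y : T) if m x y == g then a x * b y else 0].
Definition unitf : {ffun T -> k} := [ffun g => (g == e)%:R].
Definition is_inv (a ai : {ffun T -> k}) :=
  conv a ai = unitf /\ conv ai a = unitf.
End Conv.

Section GroupAlg.
Variables (k : fieldType) (gT : finGroupType).
Definition mul2 (x y : gT * gT) : gT * gT := ((x.1 * y.1)%g, (x.2 * y.2)%g).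
Definition mul3 (x y : gT * gT * gT) : gT * gT * gT :=
  (((x.1.1 * y.1.1)%g, (x.1.2 * y.1.2)%g), (x.2 * y.2)%g).

Definition gmul := @conv k gT (fun x y => (x * y)%g).
Definition g1 : {ffun gT -> k} := unitf k 1%g.
Definition gmul2 := @conv k _ mul2.
Definition g1_2 : {ffun gT * gT -> k} := unitf k (1%g, 1%g).
Definition gmul3 := @conv k _ mul3.

Definition Delta (a : {ffun gT -> k}) : {ffun gT * gT -> k} :=
  [ffun p => if p.1 == p.2 then a p.1 else 0].
Definition eps (a : {ffun gT -> k}) : k := \sum_g a g.
Definition antipode (a : {ffun gT -> k}) : {ffun gT -> k} := [ffun g => a (g^-1)%g].
Definition tens (a b : {ffun gT -> k}) : {ffun gT * gT -> k} :=
  [ffun p => a p.1 * b p.2].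
Definition flip (J : {ffun gT * gT -> k}) : {ffun gT * gT -> k} :=
  [ffun p => J (p.2, p.1)].

(* (Delta ⊗ id)(J), (id ⊗ Delta)(J), J ⊗ 1, 1 ⊗ J *)
Definition Delta_id (J : {ffun gT * gT -> k}) : {ffun gT * gT * gT -> k} :=
  [ffun p => if p.1.1 == p.1.2 then J (p.1.1, p.2) else 0].
Definition id_Delta (J : {ffun gT * gT -> k}) : {ffun gT * gT * gT -> k} :=
  [ffun p => if p.1.2 == p.2 then J (p.1.1, p.1.2) else 0].
Definition tens_1 (J : {ffun gT * gT -> k}) : {ffun gT * gT * gT -> k} :=
  [ffun p => if p.2 == 1%g then J (p.1.1, p.1.2) else 0].
Definition one_tens (J : {ffun gT * gT -> k}) : {ffun gT * gT * gT -> k} :=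
  [ffun p => if p.1.1 == 1%g then J (p.1.2, p.2) else 0].
Definition eps_id (J : {ffun gT * gT -> k}) : {ffun gT -> k} :=
  [ffun h => \sum_g J (g, h)].
Definition id_eps (J : {ffun gT * gT -> k}) : {ffun gT -> k} :=
  [ffun g => \sum_h J (g, h)].

Definition is_twist (J : {ffun gT * gT -> k}) : Prop :=
  (exists Ji, is_inv mul2 (1%g, 1%g) J Ji) /\
  gmul3 (Delta_id J) (tens_1 J) = gmul3 (id_Delta J) (one_tens J) /\
  eps_id J = g1 /\ id_eps J = g1.

(* Twisted coproduct Delta^J(x) = J^{-1} Delta(x) J, with Ji the inverse of J *)
Definition DeltaJ (J Ji : {ffun gT * gT -> k}) (a : {ffun gT -> k}) :=
  gmul2 (gmul2 Ji (Delta a)) J.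
(* Q = m o (S ⊗ id)(J) *)
Definition Qof (J : {ffun gT * gT -> k}) : {ffun gT -> k} :=
  [ffun g => \sum_(p : gT * gT | ((p.1)^-1 * p.2)%g == g) J p].
(* twisted antipode S^J(x) = Q^{-1} S(x) Q, with Qi the inverse of Q *)
Definition SJ (Q Qi : {ffun gT -> k}) (a : {ffun gT -> k}) :=
  gmul (gmul Qi (antipode a)) Q.
(* R-matrix J_21^{-1} J ; (J_21)^{-1} = (J^{-1})_21 *)
Definition Rmat (J Ji : {ffun gT * gT -> k}) := gmul2 (flip Ji) J.
End GroupAlg.

(* A k-linear map k[G] -> k[G'] given by the images F g of the basis vectors g *)
Section LinMap.
Variables (k : fieldType) (gT hT : finGroupType).
Definition applyL (F : gT -> {ffun hT -> k}) (a : {ffun gT -> k}) : {ffun hT -> k} :=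
  [ffun h => \sum_g a g * F g h].
Definition applyL2 (F : gT -> {ffun hT -> k}) (x : {ffun gT * gT -> k})
  : {ffun hT * hT -> k} :=
  [ffun q => \sum_(p : gT * gT) x p * F p.1 q.1 * F p.2 q.2].

Definition tri_hopf_iso (J Ji : {ffun gT * gT -> k}) (J' Ji' : {ffun hT * hT -> k})
  (F : gT -> {ffun hT -> k}) : Prop :=
  let f := applyL F in
  bijective f /\
      (forall a b, f (gmul a b) = gmul (f a) (f b)) /\
      f (g1 k gT) = g1 k hT /\
      (forall a, eps (f a) = eps a) /\
      (forall a, applyL2 F (DeltaJ J Ji a) = DeltaJ J' Ji' (f a)) /\
      (forall Qi Qi', is_inv (fun x y => (x * y)%g) 1%g (Qof J) Qi ->
                      is_inv (fun x y => (x * y)%g) 1%g (Qof J') Qi' ->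
         forall a, f (SJ (Qof J) Qi a) = SJ (Qof J') Qi' (f a)) /\
      applyL2 F (Rmat J Ji) = Rmat J' Ji'.

Definition push2 (phi : gT -> hT) (J : {ffun gT * gT -> k}) : {ffun hT * hT -> k} :=
  [ffun q => \sum_(p : gT * gT | (phi p.1, phi p.2) == q) J p].
End LinMap.

Definition gauge_equiv (k : fieldType) (gT : finGroupType)
  (J1 J2 : {ffun gT * gT -> k}) : Prop :=
  exists x xi : {ffun gT -> k},
    is_inv (fun a b => (a * b)%g) 1%g x xi /\ eps x = 1 /\
    J2 = gmul2 (gmul2 (Delta x) J1) (tens xi xi).

(* Let f be the isomorphism, K = (f ⊗ f)(J) and L = K J'^-1.  Since f intertwines the
   twisted coproducts, Δ(f g) = L^-1 (f g ⊗ f g) L, and since it matches the R-matrices,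
   L is symmetric; transporting the twist equation of J shows that L^-1 is a twist of
   k[G'].  Over an algebraically closed field a symmetric twist of a group algebra is
   trivial: the operators it defines on k[G'] commute, and a suitably normalised common
   eigenvector y satisfies Δ(y) L^-1 = y ⊗ y.  Then y f(g) y^-1 is grouplike, hence equal
   to φ(g) for a group isomorphism φ, and J' = Δ(y^-1) (φ ⊗ φ)(J) (y ⊗ y). *)

From mathcomp Require Import all_boot all_algebra all_fingroup.

Set Implicit Arguments.
Unset Strict Implicit.
Unset Printing Implicit Defensive.
Import GRing.Theory.
Local Open Scope ring_scope.

Section GroupAlgebra.
Variable k : fieldType.
Local Notation alg T := {ffun T -> k}.

Definition delta (T : finType) (s : T) : alg T := [ffun t => (t == s)%:R].

Lemma deltaE (T : finType) (s t : T) : delta s t = (t == s)%:R.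
Proof. by rewrite ffunE. Qed.

Lemma delta_inj (T : finType) : injective (@delta T).
Proof.
move=> s t /ffunP/(_ s); rewrite !deltaE eqxx.
by case: eqP => // _ /eqP; rewrite oner_eq0.
Qed.

Lemma sum_delta_mull (T : finType) (s : T) (G : T -> k) :
  \sum_t (t == s)%:R * G t = G s.
Proof.
rewrite (bigD1 s) //= eqxx mul1r big1 ?addr0 // => t /negbTE ->.
by rewrite mul0r.
Qed.

Lemma sum_delta_mulr (T : finType) (s : T) (G : T -> k) :
  \sum_t G t * (t == s)%:R = G s.
Proof. by rewrite -[RHS](sum_delta_mull s); apply: eq_bigr => t _; rewrite mulrC. Qed.

Lemma gmulE (T : finGroupType) (a b : alg T) g :
  gmul a b g = \sum_x a x * b (x^-1 * g)%g.
Proof.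
rewrite ffunE; apply: eq_bigr => x _.
rewrite (eq_bigr (fun y => if y == (x^-1 * g)%g then a x * b y else 0)).
  by rewrite -big_mkcond big_pred1_eq.
move=> y _; have -> // : ((x * y)%g == g) = (y == (x^-1 * g)%g).
by apply/eqP/eqP => [<-|->]; rewrite ?mulKg ?mulKVg.
Qed.

Lemma gmulA (T : finGroupType) (a b c : alg T) :
  gmul a (gmul b c) = gmul (gmul a b) c.
Proof.
apply/esym/ffunP => g; rewrite !gmulE.
under eq_bigr do rewrite gmulE big_distrl /=.
rewrite exchange_big /=; apply: eq_bigr => y _.
rewrite gmulE big_distrr /= (reindex_inj (mulgI y)) /=.
by apply: eq_bigr => z _; rewrite mulKg invMg -mulgA mulrA.
Qed.

Lemma gmul1l (T : finGroupType) (a : alg T) : gmul (delta 1%g) a = a.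
Proof.
apply/ffunP => g; rewrite gmulE.
under eq_bigr do rewrite deltaE.
by rewrite sum_delta_mull invg1 mul1g.
Qed.

Lemma gmul1r (T : finGroupType) (a : alg T) : gmul a (delta 1%g) = a.
Proof.
apply/ffunP => g; rewrite gmulE.
under eq_bigr do rewrite deltaE -eq_mulVg1.
by rewrite sum_delta_mulr.
Qed.

Lemma gmul_delta (T : finGroupType) (s t : T) :
  gmul (delta s) (delta t) = delta (s * t)%g.
Proof.
apply/ffunP => g; rewrite gmulE.
under eq_bigr do rewrite deltaE.
by rewrite sum_delta_mull !deltaE -(inj_eq (mulgI s)) mulKVg.
Qed.

Lemma eps_delta (T : finGroupType) (s : T) : eps (delta s) = 1.
Proof.
by rewrite /eps (bigD1 s) //= big1 => [|t /negbTE]; rewrite deltaE ?eqxx ?addr0 // => ->.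
Qed.

Lemma eps_gmul (T : finGroupType) (a b : alg T) : eps (gmul a b) = eps a * eps b.
Proof.
rewrite /eps; under eq_bigr do rewrite gmulE.
rewrite exchange_big big_distrl /=; apply: eq_bigr => x _.
rewrite -big_distrr /= (reindex_inj (mulgI x)) /=.
by congr (_ * _); apply: eq_bigr => y _; rewrite mulKg.
Qed.

Section Inverse.
Variables (T : finGroupType) (a b : alg T).
Hypothesis ab1 : gmul a b = delta 1%g.

Lemma gmulKl c : gmul a (gmul b c) = c.
Proof. by rewrite gmulA ab1 gmul1l. Qed.

Lemma gmulKr c : gmul (gmul c a) b = c.
Proof. by rewrite -gmulA ab1 gmul1r. Qed.

Lemma gmulI : injective (fun c => gmul c a).
Proof. by move=> c d /(congr1 (fun x => gmul x b)); rewrite /= !gmulKr. Qed.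

Lemma gmul_inv_uniq b' : gmul b' a = delta 1%g -> b = b'.
Proof. by move=> b'a1; rewrite -[b]gmul1l -b'a1 gmulKr. Qed.

End Inverse.

Lemma gmul_invM (T : finGroupType) (a a' b b' : alg T) :
    gmul a a' = delta 1%g -> gmul b b' = delta 1%g ->
  gmul (gmul a b) (gmul b' a') = delta 1%g.
Proof. by move=> aa' bb'; rewrite -gmulA (gmulKl bb'). Qed.

Section RegularMatrix.
Variable T : finGroupType.

Definition regmx (a : alg T) : 'M[k]_#|T| :=
  \matrix_(i, j) a (enum_val i * (enum_val j)^-1)%g.

Lemma sum_enum_val (G : T -> k) : \sum_(i < #|T|) G (enum_val i) = \sum_h G h.
Proof.
rewrite (reindex enum_rank (onW_bij _ (@enum_rank_bij T))) /=.
by apply: eq_bigr => h _; rewrite enum_rankK.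
Qed.

Lemma regmxM (a b : alg T) : regmx (gmul a b) = regmx a *m regmx b.
Proof.
apply/matrixP => i j; rewrite !mxE gmulE.
under [RHS]eq_bigr do rewrite !mxE.
rewrite (sum_enum_val (fun h => a (enum_val i * h^-1)%g * b (h * (enum_val j)^-1)%g)).
have inj_div : injective (fun h : T => (enum_val i * h^-1)%g).
  by move=> x y /mulgI /invg_inj.
rewrite (reindex_inj inj_div) /=; apply: eq_bigr => h _.
by rewrite invMg invgK !mulgA mulgKV.
Qed.

Lemma regmx1 : regmx (delta 1%g) = 1%:M.
Proof.
by apply/matrixP => i j; rewrite !mxE deltaE -eq_mulgV1 (inj_eq enum_val_inj).
Qed.

Lemma regmx_inj : injective regmx.
Proof.
move=> a b /matrixP/(_ (enum_rank _) (enum_rank 1%g)) E; apply/ffunP => g.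
by move: (E g); rewrite !mxE !enum_rankK invg1 mulg1.
Qed.

Lemma gmul_eq1C (a b : alg T) : gmul a b = delta 1%g -> gmul b a = delta 1%g.
Proof.
move=> ab1; apply: regmx_inj; rewrite regmxM regmx1; apply: mulmx1C.
by rewrite -regmxM ab1 regmx1.
Qed.

End RegularMatrix.

Lemma applyL_delta (S T : finGroupType) (F : S -> alg T) s : applyL F (delta s) = F s.
Proof.
apply/ffunP => t; rewrite ffunE.
under eq_bigr do rewrite deltaE.
by rewrite sum_delta_mull.
Qed.

Lemma applyL_id (T : finGroupType) (a : alg T) : applyL (@delta T) a = a.
Proof.
apply/ffunP => t; rewrite ffunE.
under eq_bigr do rewrite deltaE eq_sym.
by rewrite sum_delta_mulr.
Qed.

Lemma eq_applyL (S T : finGroupType) (F F' : S -> alg T) a : F =1 F' -> applyL F a = applyL F' a.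
Proof. by move=> eFF'; apply/ffunP => t; rewrite !ffunE; apply: eq_bigr => s _; rewrite eFF'. Qed.

Lemma applyL_comp (S T U : finGroupType) (F : S -> alg T) (G : T -> alg U) a :
  applyL G (applyL F a) = applyL (fun s => applyL G (F s)) a.
Proof.
apply/ffunP => u; rewrite !ffunE.
under eq_bigr do rewrite ffunE big_distrl /=.
rewrite exchange_big /=; apply: eq_bigr => s _; rewrite ffunE big_distrr /=.
by apply: eq_bigr => t _; rewrite mulrA.
Qed.

Lemma gmul_applyLr (S T : finGroupType) (c : alg T) (F : S -> alg T) a :
  gmul c (applyL F a) = applyL (fun s => gmul c (F s)) a.
Proof.
apply/ffunP => t; rewrite gmulE ffunE.
under eq_bigr do rewrite ffunE big_distrr /=.
rewrite exchange_big /=; apply: eq_bigr => s _; rewrite gmulE big_distrr /=.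
by apply: eq_bigr => x _; rewrite mulrCA.
Qed.

Lemma gmul_applyLl (S T : finGroupType) (c : alg T) (F : S -> alg T) a :
  gmul (applyL F a) c = applyL (fun s => gmul (F s) c) a.
Proof.
apply/ffunP => t; rewrite gmulE ffunE.
under eq_bigr do rewrite ffunE big_distrl /=.
rewrite exchange_big /=; apply: eq_bigr => s _; rewrite gmulE big_distrr /=.
by apply: eq_bigr => x _; rewrite mulrA.
Qed.

Lemma applyL_gmul (S T : finGroupType) (F : S -> alg T) :
  (forall s s', F (s * s')%g = gmul (F s) (F s')) ->
  forall a b, applyL F (gmul a b) = gmul (applyL F a) (applyL F b).
Proof.
move=> FM a b.
have -> : gmul a b = applyL (fun x => applyL (fun y => delta (x * y)%g) b) a.
  apply/ffunP => g; rewrite gmulE ffunE; apply: eq_bigr => x _.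
  rewrite ffunE; congr (_ * _).
  under eq_bigr => y _ do rewrite deltaE eq_sym (canF_eq (mulKg x)).
  by rewrite sum_delta_mulr.
rewrite applyL_comp gmul_applyLl; apply: eq_applyL => x.
rewrite applyL_comp gmul_applyLr; apply: eq_applyL => y.
by rewrite applyL_delta FM.
Qed.

End GroupAlgebra.

Section Pushforward.
Variable k : fieldType.
Local Notation alg T := {ffun T -> k}.

Definition push (S T : finGroupType) (s : S -> T) (a : alg S) : alg T :=
  applyL (fun x => delta k (s x)) a.

Lemma pushE (S T : finGroupType) (s : S -> T) a t :
  push s a t = \sum_(x | s x == t) a x.
Proof.
rewrite ffunE [RHS]big_mkcond /=; apply: eq_bigr => x _.
by rewrite deltaE eq_sym; case: eqP; rewrite ?mulr1 ?mulr0.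
Qed.

Lemma push_can (S T : finGroupType) (s : S -> T) (r : T -> S) a t :
  cancel s r -> push s a t = if s (r t) == t then a (r t) else 0.
Proof.
move=> sK; rewrite pushE; case: eqP => [srt | nsrt].
  rewrite (big_pred1 (r t)) // => x /=.
  by apply/eqP/eqP => [<- | ->]; rewrite ?sK.
by rewrite big_pred0 // => x; apply/eqP => sxt; case: nsrt; rewrite -sxt sK.
Qed.

Lemma push_delta (S T : finGroupType) (s : S -> T) x :
  push s (delta k x) = delta k (s x).
Proof. exact: applyL_delta. Qed.

Lemma pushM (S T : finGroupType) (s : S -> T) :
  {morph s : x y / (x * y)%g} -> {morph push s : a b / gmul a b}.
Proof. by move=> sM a b; apply: applyL_gmul => x y; rewrite sM gmul_delta. Qed.

Lemma push_comp (S T U : finGroupType) (s : S -> T) (t : T -> U) a :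
  push t (push s a) = push (t \o s) a.
Proof. by rewrite /push applyL_comp; apply: eq_applyL => x; rewrite applyL_delta. Qed.

Lemma push_cst (S T : finGroupType) (t : T) (a : alg S) :
  eps a = 1 -> push (fun _ => t) a = delta k t.
Proof.
move=> a1; apply/ffunP => u; rewrite pushE deltaE eq_sym.
by case: eqP => _; [rewrite -a1 | rewrite big_pred0].
Qed.

End Pushforward.

Section Tensors.
Variable k : fieldType.
Local Notation alg T := {ffun T -> k}.

Definition tensor (A B : finGroupType) (a : alg A) (b : alg B) : alg (A * B) :=
  [ffun p => a p.1 * b p.2].

Lemma sum_pair (A B : finType) (G : A * B -> k) :
  \sum_(x : A * B) G x = \sum_a \sum_b G (a, b).
Proof. by rewrite pair_bigA; apply: eq_bigr => -[]. Qed.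

Lemma gmul_pairE (A B : finGroupType) (X Y : alg (A * B)) p :
  gmul X Y p = \sum_x1 \sum_x2 X (x1, x2) * Y ((x1^-1 * p.1)%g, (x2^-1 * p.2)%g).
Proof. by rewrite gmulE sum_pair. Qed.

Lemma tensor_gmul (A B : finGroupType) (a c : alg A) (b d : alg B) :
  gmul (tensor a b) (tensor c d) = tensor (gmul a c) (gmul b d).
Proof.
apply/ffunP => p; rewrite gmul_pairE ffunE !gmulE big_distrlr.
by apply: eq_bigr => x1 _; apply: eq_bigr => x2 _; rewrite !ffunE mulrACA.
Qed.

Lemma tensor_delta (A B : finGroupType) (s : A) (t : B) :
  tensor (delta k s) (delta k t) = delta k (s, t).
Proof.
apply/ffunP => -[p1 p2]; rewrite !ffunE /= xpair_eqE.
by case: (p1 == s); case: (p2 == t); rewrite ?mulr1 ?mulr0.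
Qed.

Variable gT : finGroupType.
Implicit Types (a b c d y : alg gT) (X Y : alg (gT * gT)).

Lemma tens_gmul a b c d : gmul (tens a b) (tens c d) = tens (gmul a c) (gmul b d).
Proof. exact: tensor_gmul. Qed.

Lemma tens_delta (s t : gT) : tens (delta k s) (delta k t) = delta k (s, t).
Proof. exact: tensor_delta. Qed.

Definition tens12 a X : alg (gT * gT * gT) :=
  push (fun t : gT * (gT * gT) => ((t.1, t.2.1), t.2.2)) (tensor a X).

Lemma tens12E a X t : tens12 a X t = a t.1.1 * X (t.1.2, t.2).
Proof.
rewrite (@push_can _ _ _ _ (fun t => (t.1.1, (t.1.2, t.2)))); last by case=> ? [].
by case: t => [[t1 t2] t3]; rewrite eqxx ffunE.
Qed.

Lemma tens12_gmul a b X Y : gmul (tens12 a X) (tens12 b Y) = tens12 (gmul a b) (gmul X Y).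
Proof. by rewrite /tens12 -pushM // tensor_gmul. Qed.

Lemma tensor_tens a b c : tensor (tens a b) c = tens12 a (tens b c).
Proof. by apply/ffunP => t; rewrite tens12E !ffunE mulrA. Qed.

Lemma Delta_push a : Delta a = push (fun g => (g, g)) a.
Proof.
apply/ffunP => -[p1 p2]; rewrite (@push_can _ _ _ _ fst) // ffunE /=.
by rewrite xpair_eqE eqxx eq_sym.
Qed.

Lemma Delta_gmul : {morph @Delta k gT : a b / gmul a b}.
Proof. by move=> a b; rewrite !Delta_push pushM. Qed.

Lemma Delta_delta (s : gT) : Delta (delta k s) = delta k (s, s).
Proof. by rewrite Delta_push push_delta. Qed.

Lemma flip_push X : flip X = push (fun p => (p.2, p.1)) X.
Proof.
apply/ffunP => -[p1 p2].
by rewrite (@push_can _ _ _ _ (fun p => (p.2, p.1))) ?eqxx ?ffunE // => -[].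
Qed.

Lemma flip_gmul : {morph @flip k gT : X Y / gmul X Y}.
Proof. by move=> X Y; rewrite !flip_push pushM. Qed.

Lemma flip_delta (s : gT * gT) : flip (delta k s) = delta k (s.2, s.1).
Proof. by rewrite flip_push push_delta. Qed.

Lemma flip_tens a b : flip (tens a b) = tens b a.
Proof. by apply/ffunP => q; rewrite !ffunE mulrC. Qed.

Lemma Delta_id_push X : Delta_id X = push (fun p => ((p.1, p.1), p.2)) X.
Proof.
apply/ffunP => t; rewrite (@push_can _ _ _ _ (fun t => (t.1.1, t.2))) //=; last by case.
by case: t => [[p1 p2] p3]; rewrite ffunE /= !xpair_eqE !eqxx andbT eq_sym.
Qed.

Lemma id_Delta_push X : id_Delta X = push (fun p => ((p.1, p.2), p.2)) X.
Proof.
apply/ffunP => t; rewrite (@push_can _ _ _ _ (fun t => (t.1.1, t.1.2))) //=; last by case.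
by case: t => [[p1 p2] p3]; rewrite ffunE /= !xpair_eqE !eqxx.
Qed.

Lemma tens_1_push X : tens_1 X = push (fun p => (p, 1%g)) X.
Proof.
apply/ffunP => t; rewrite (@push_can _ _ _ _ (fun t => t.1)) //=.
by case: t => [[p1 p2] p3]; rewrite ffunE /= !xpair_eqE !eqxx eq_sym.
Qed.

Lemma one_tens_push X : one_tens X = push (fun p => ((1%g, p.1), p.2)) X.
Proof.
apply/ffunP => t; rewrite (@push_can _ _ _ _ (fun t => (t.1.2, t.2))) //=; last by case.
by case: t => [[p1 p2] p3]; rewrite ffunE /= !xpair_eqE !eqxx !andbT eq_sym.
Qed.

Lemma Delta_id_gmul : {morph @Delta_id k gT : X Y / gmul X Y}.
Proof. by move=> X Y; rewrite !Delta_id_push pushM. Qed.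

Lemma id_Delta_gmul : {morph @id_Delta k gT : X Y / gmul X Y}.
Proof. by move=> X Y; rewrite !id_Delta_push pushM. Qed.

Lemma tens_1_gmul : {morph @tens_1 k gT : X Y / gmul X Y}.
Proof. by move=> X Y; rewrite !tens_1_push pushM // => p q; rewrite -[in LHS](mulg1 1%g). Qed.

Lemma one_tens_gmul : {morph @one_tens k gT : X Y / gmul X Y}.
Proof. by move=> X Y; rewrite !one_tens_push pushM // => p q; rewrite -[in LHS](mulg1 1%g). Qed.

Lemma Delta_id1 : Delta_id (delta k 1%g) = delta k (1%g : gT * gT * gT).
Proof. by rewrite Delta_id_push push_delta. Qed.

Lemma id_Delta1 : id_Delta (delta k 1%g) = delta k (1%g : gT * gT * gT).
Proof. by rewrite id_Delta_push push_delta. Qed.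

Lemma tens_1_1 : tens_1 (delta k 1%g) = delta k (1%g : gT * gT * gT).
Proof. by rewrite tens_1_push push_delta. Qed.

Lemma one_tens1 : one_tens (delta k 1%g) = delta k (1%g : gT * gT * gT).
Proof. by rewrite one_tens_push push_delta. Qed.

Lemma tens_1E X : tens_1 X = tensor X (delta k 1%g).
Proof. by apply/ffunP => -[[p1 p2] p3]; rewrite !ffunE /=; case: eqP; rewrite ?mulr1 ?mulr0. Qed.

Lemma one_tensE X : one_tens X = tens12 (delta k 1%g) X.
Proof. by apply/ffunP => t; rewrite tens12E !ffunE; case: eqP; rewrite ?mul1r ?mul0r. Qed.

Lemma Delta_id_tens a b : Delta_id (tens a b) = tensor (Delta a) b.
Proof. by apply/ffunP => -[[p1 p2] p3]; rewrite !ffunE /=; case: eqP => [->|]; rewrite ?mul0r. Qed.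

Lemma id_Delta_tens a b : id_Delta (tens a b) = tens12 a (Delta b).
Proof. by apply/ffunP => t; rewrite tens12E !ffunE /=; case: eqP => [->|]; rewrite ?mulr0. Qed.

Lemma id_eps_push X : id_eps X = push fst X.
Proof.
apply/ffunP => g; rewrite pushE ffunE [RHS]big_mkcond sum_pair.
rewrite [RHS](bigD1 g) //= [X in _ + X]big1 ?addr0 => [|g' /negbTE g'g].
  by apply: eq_bigr => h _; rewrite eqxx.
by apply: big1 => h _; rewrite g'g.
Qed.

Lemma id_eps_gmul : {morph @id_eps k gT : X Y / gmul X Y}.
Proof. by move=> X Y; rewrite !id_eps_push pushM. Qed.

Lemma id_eps_tens a b : eps b = 1 -> id_eps (tens a b) = a.
Proof.
move=> b1; apply/ffunP => g; rewrite !ffunE -[RHS]mulr1 -b1 /eps big_distrr /=.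
by apply: eq_bigr => h _; rewrite ffunE.
Qed.

Lemma gmul_DeltaE y X p q :
  gmul (Delta y) X (p, q) = \sum_g y g * X ((g^-1 * p)%g, (g^-1 * q)%g).
Proof.
rewrite gmul_pairE; apply: eq_bigr => g _.
rewrite (bigD1 g) //= big1 ?addr0 => [|h hg]; rewrite ffunE /= ?eqxx //.
by rewrite eq_sym (negbTE hg) mul0r.
Qed.

End Tensors.

Section Antipode.
Variables (k : fieldType) (gT : finGroupType).
Local Notation alg T := {ffun T -> k}.
Implicit Types (a b y : alg gT) (X : alg (gT * gT)).

Lemma antipode_gmul a b : antipode (gmul a b) = gmul (antipode b) (antipode a).
Proof.
apply/ffunP => g; rewrite ffunE !gmulE (reindex_inj (mulgI g^-1)%g) /=.
apply: eq_bigr => x _; rewrite !ffunE mulrC !invMg !invgK mulgK.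
by [].
Qed.

Lemma antipode_delta (s : gT) : antipode (delta k s) = delta k s^-1%g.
Proof. by apply/ffunP => g; rewrite ffunE !deltaE -(inj_eq invg_inj) invgK. Qed.

Definition mulS X : alg gT := push (fun p => (p.1 * p.2^-1)%g) X.

Lemma mulS_tens a b : mulS (tens a b) = gmul a (antipode b).
Proof.
apply/ffunP => h; rewrite pushE gmulE big_mkcond sum_pair.
apply: eq_bigr => x _; rewrite (bigD1 (h^-1 * x)%g) //= big1 ?addr0.
  by rewrite !ffunE /= invMg invgK mulKVg eqxx invMg invgK.
move=> z /eqP zx; case: eqP => // xz; case: zx.
by rewrite -xz invMg invgK mulgKV.
Qed.

Lemma mulS_Delta a : eps a = 1 -> mulS (Delta a) = delta k 1%g.
Proof.
move=> a1; rewrite /mulS Delta_push push_comp -(push_cst (1%g : gT) a1).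
by apply/ffunP => h; rewrite !pushE; apply: eq_bigl => g /=; rewrite mulgV.
Qed.

Lemma mulS_tens_gmul a b X :
  mulS (gmul (tens a b) X) = gmul (gmul a (mulS X)) (antipode b).
Proof.
rewrite -[X in LHS]applyL_id gmul_applyLr /mulS /push applyL_comp.
rewrite gmul_applyLr gmul_applyLl; apply: eq_applyL => -[p1 p2].
rewrite -/(push _ _) -/(mulS _) -tensor_delta tensor_gmul mulS_tens /=.
by rewrite antipode_gmul antipode_delta -!gmulA (gmulA (delta k p1)) gmul_delta.
Qed.

Lemma coboundary_inv y X :
  eps y = 1 -> Delta y = gmul (tens y y) X -> gmul y (gmul (mulS X) (antipode y)) = delta k 1%g.
Proof. by move=> y1 DyX; rewrite gmulA -mulS_tens_gmul -DyX mulS_Delta. Qed.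

Lemma grouplike_delta (u : alg gT) :
  Delta u = tens u u -> eps u = 1 -> exists h, u = delta k h.
Proof.
move=> Du u1.
have Duu p q : u p * u q = if p == q then u p else 0.
  by have /ffunP/(_ (p, q)) := Du; rewrite !ffunE.
have [p up0] : exists p, u p != 0.
  apply/existsP; apply: contraT; rewrite negb_exists => /forallP u0.
  move: u1; rewrite /eps big1 => [/eqP | q _]; first by rewrite eq_sym oner_eq0.
  by apply/eqP; move: (u0 q); rewrite negbK.
have up1 : u p = 1 by apply: (mulIf up0); rewrite mul1r Duu eqxx.
exists p; apply/ffunP => q; rewrite deltaE; case: eqP => [-> // | /eqP qp].
by rewrite -[u q]mul1r -up1 Duu eq_sym (negbTE qp).
Qed.

End Antipode.

Section CommonEigenvector.
Variables (F : closedFieldType) (n : nat).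
Implicit Types (A B V : 'M[F]_n).

Lemma stable_cap_eigenspace_neq0 V A :
  V != 0 -> stablemx V A -> exists a, (V :&: eigenspace A a)%MS != 0.
Proof.
move=> V0 VA; have /closed_rootP [a Ba] : size (char_poly (restrictmx V A)) != 1%N.
  by rewrite size_char_poly eqSS mxrank_eq0.
exists a; set W := eigenspace (restrictmx V A) a.
have W0 : W != 0 by rewrite -/(eigenvalue _ a) eigenvalue_root_char.
have WV : (W *m row_base V <= V :&: eigenspace A a)%MS.
  rewrite sub_capmx -sub_eigenspace_conjmx ?stablemx_row_base ?row_base_free //.
  by rewrite submx_refl andbT (submx_trans (submxMl _ _)) ?eq_row_base.
apply: contraNneq W0 => VA0.
by rewrite -(mulmx_free_eq0 _ (row_base_free V)) -submx0 -VA0.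
Qed.

Lemma stable_cap_eigenspace V A B a :
  comm_mx A B -> stablemx V B -> stablemx (V :&: eigenspace A a)%MS B.
Proof.
move=> cAB VB; rewrite sub_capmx; apply/andP; split.
  exact: submx_trans (submxMr _ (capmxSl _ _)) VB.
exact: submx_trans (submxMr _ (capmxSr _ _)) (comm_mx_stable_eigenspace a cAB).
Qed.

Lemma common_eigenvector_sub (As : seq 'M[F]_n) V :
    {in As &, forall A B, comm_mx A B} -> V != 0 -> {in As, forall A, stablemx V A} ->
  exists2 v : 'rV_n, v != 0 & (v <= V)%MS /\ {in As, forall A, exists a, v *m A = a *: v}.
Proof.
elim: As V => [|A As IHAs] V cAs V0 VAs.
  by exists (nz_row V); rewrite ?nz_row_eq0 ?nz_row_sub.
have [a VAa0] := stable_cap_eigenspace_neq0 V0 (VAs A (mem_head _ _)).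
have [||v v0 [vV vAs]] := IHAs (V :&: eigenspace A a)%MS _ VAa0.
- by move=> B C BAs CAs; apply: cAs; rewrite inE ?BAs ?CAs orbT.
- move=> B BAs; apply: stable_cap_eigenspace.
    by apply: cAs; rewrite inE ?eqxx ?BAs ?orbT.
  by apply: VAs; rewrite inE BAs orbT.
exists v => //; split; first exact: submx_trans vV (capmxSl _ _).
move=> B; rewrite inE => /predU1P [-> | BAs]; last exact: vAs.
by exists a; apply/eigenspaceP; apply: submx_trans vV (capmxSr _ _).
Qed.

Lemma common_eigenvector (As : seq 'M[F]_n) :
    (0 < n)%N -> {in As &, forall A B, comm_mx A B} ->
  exists2 v : 'rV_n, v != 0 & {in As, forall A, exists a, v *m A = a *: v}.
Proof.
move=> n_gt0 cAs; have [||v v0 [_ vAs]] := common_eigenvector_sub cAs (V := 1%:M).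
- by rewrite -mxrank_eq0 mxrank1 -lt0n.
- by move=> A _; rewrite submx1.
by exists v.
Qed.

End CommonEigenvector.

Definition twist_cocycle (k : fieldType) (gT : finGroupType) (X : {ffun gT * gT -> k}) :=
  gmul (Delta_id X) (tens_1 X) = gmul (id_Delta X) (one_tens X).

Section SymmetricTwist.
Variables (k : closedFieldType) (hT : finGroupType).
Local Notation alg T := {ffun T -> k}.
Variable M : alg (hT * hT).
Hypothesis M_sym : flip M = M.
Hypothesis M_counit : id_eps M = delta k 1%g.
Hypothesis M_cocycle : twist_cocycle M.

Lemma M_symE p q : M (p, q) = M (q, p).
Proof. by rewrite -[in LHS]M_sym ffunE. Qed.

Lemma cocycle_lhsE a b c : gmul (Delta_id M) (tens_1 M) ((a, b), c) =
  \sum_s M (s, c) * M ((s^-1 * a)%g, (s^-1 * b)%g).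
Proof.
rewrite gmul_pairE sum_pair; apply: eq_bigr => x1 _.
rewrite (bigD1 x1) //= [X in _ + X]big1 ?addr0; last first.
  by move=> x2 nx; apply: big1 => z _; rewrite ffunE /= eq_sym (negbTE nx) mul0r.
rewrite (bigD1 c) //= [X in _ + X]big1 ?addr0 => [|z nz]; rewrite !ffunE /=.
  by rewrite eqxx mulVg eqxx.
by rewrite -eq_mulVg1 (negbTE nz) mulr0.
Qed.

Lemma cocycle_rhsE a b c : gmul (id_Delta M) (one_tens M) ((a, b), c) =
  \sum_s M (a, s) * M ((s^-1 * b)%g, (s^-1 * c)%g).
Proof.
rewrite gmul_pairE sum_pair (bigD1 a) //= [X in _ + X]big1 ?addr0; last first.
  move=> x1 nx; apply: big1 => x2 _; apply: big1 => z _; rewrite !ffunE /=.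
  by rewrite -eq_mulVg1 eq_sym (negbTE nx) !mulr0.
apply: eq_bigr => x2 _; rewrite (bigD1 x2) //= [X in _ + X]big1 ?addr0.
  by rewrite !ffunE /= !eqxx mulVg eqxx.
by move=> z nz; rewrite !ffunE /= eq_sym (negbTE nz) mul0r.
Qed.

Lemma twist_sum_sym a b c :
  \sum_s M (s, c) * M ((s^-1 * a)%g, (s^-1 * b)%g) =
  \sum_s M (s, b) * M ((s^-1 * a)%g, (s^-1 * c)%g).
Proof.
rewrite -!cocycle_lhsE M_cocycle !cocycle_rhsE.
by apply: eq_bigr => s _; rewrite M_symE [M (_, (s^-1 * c)%g)]M_symE.
Qed.

(* With y g := v 0 (enum_rank g), entry p of v *m twist_mx q is (Delta y * M)(p, q). *)
Definition twist_mx (q : hT) : 'M[k]_#|hT| :=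
  \matrix_(i, j) M (((enum_val i)^-1 * enum_val j)%g, ((enum_val i)^-1 * q)%g).

Lemma twist_mx_comm q r : twist_mx q *m twist_mx r = twist_mx r *m twist_mx q.
Proof.
apply/matrixP => i j; rewrite !mxE.
under eq_bigr do rewrite !mxE.
under [RHS]eq_bigr do rewrite !mxE.
set gi := enum_val i; set gj := enum_val j.
pose term x y h := M ((gi^-1 * h)%g, (gi^-1 * x)%g) * M ((h^-1 * gj)%g, (h^-1 * y)%g).
rewrite (sum_enum_val (term q r)) (sum_enum_val (term r q)) /term.
rewrite (reindex_inj (mulgI gi)) [RHS](reindex_inj (mulgI gi)) /=.
under eq_bigr do rewrite mulKg invMg -!mulgA.
under [RHS]eq_bigr do rewrite mulKg invMg -!mulgA.
exact: twist_sum_sym.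
Qed.

Lemma twist_eigenvector : exists y0 : alg hT, exists2 l : hT -> k,
  y0 != 0 & forall p q, gmul (Delta y0) M (p, q) = l q * y0 p.
Proof.
have n_gt0 : (0 < #|hT|)%N by apply/card_gt0P; exists 1%g.
have cT : {in [seq twist_mx q | q <- enum hT] &, forall A B, comm_mx A B}.
  by move=> _ _ /mapP[q _ ->] /mapP[r _ ->]; apply: twist_mx_comm.
have [v v0 vT] := common_eigenvector n_gt0 cT.
have [l lP] := fin_all_exists (fun q => vT (twist_mx q) (map_f _ (mem_enum _ q))).
exists [ffun g => v 0 (enum_rank g)], l.
  apply: contraNneq v0 => /ffunP y00; apply/eqP/rowP => i.
  by move: (y00 (enum_val i)); rewrite !ffunE enum_valK !mxE.
move=> p q; rewrite gmul_DeltaE ffunE.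
have /rowP/(_ (enum_rank p)) := lP q; rewrite !mxE => <-.
rewrite -(sum_enum_val (fun g => _ g * M ((g^-1 * p)%g, (g^-1 * q)%g))).
by apply: eq_bigr => i _; rewrite !mxE ffunE enum_valK enum_rankK.
Qed.

Section Eigenvector.
Variables (y0 : alg hT) (l : hT -> k).
Hypothesis y0_neq0 : y0 != 0.
Hypothesis y0_eigen : forall p q, gmul (Delta y0) M (p, q) = l q * y0 p.

Lemma eigen_counit p : \sum_q l q * y0 p = y0 p.
Proof.
under eq_bigr do rewrite -y0_eigen gmul_DeltaE.
rewrite exchange_big /=.
transitivity (\sum_h y0 h * id_eps M (h^-1 * p)%g).
  apply: eq_bigr => h _; rewrite -big_distrr ffunE /= (reindex_inj (mulgI h)) /=.
  by under eq_bigr do rewrite mulKg.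
by under eq_bigr do rewrite M_counit deltaE -eq_mulVg1; rewrite sum_delta_mulr.
Qed.

Lemma eigen_sym p q : l q * y0 p = l p * y0 q.
Proof. by rewrite -!y0_eigen !gmul_DeltaE; apply: eq_bigr => h _; rewrite M_symE. Qed.

Lemma eigen_coboundary : gmul (Delta [ffun q => l q]) M =
  tens [ffun q => l q] [ffun q => l q] /\ eps [ffun q => l q] = 1.
Proof.
pose s := eps y0.
have y0E p : y0 p = l p * s.
  by rewrite -eigen_counit /s /eps big_distrr; apply: eq_bigr => q _; rewrite eigen_sym.
have s0 : s != 0.
  apply: contraNneq y0_neq0 => s0; apply/eqP/ffunP => p.
  by rewrite y0E s0 mulr0 ffunE.
split.
  apply/ffunP => -[p q]; apply: (mulIf s0); rewrite gmul_DeltaE !ffunE /=.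
  rewrite (mulrC (l p)) -mulrA -y0E.
  rewrite -y0_eigen gmul_DeltaE big_distrl /=; apply: eq_bigr => h _.
  by rewrite ffunE y0E mulrAC.
apply: (mulIf s0); rewrite [X in _ = X]mul1r /eps big_distrl /=.
by apply: eq_bigr => p _; rewrite ffunE -y0E.
Qed.

End Eigenvector.

Theorem symmetric_twist_coboundary :
  exists y : alg hT, gmul (Delta y) M = tens y y /\ eps y = 1.
Proof.
have [y0 [l y00 y0P]] := twist_eigenvector.
by exists [ffun q => l q]; apply: eigen_coboundary y00 y0P.
Qed.

End SymmetricTwist.

Lemma twist_cocycle_inv (k : fieldType) (gT : finGroupType) (X Xi : {ffun gT * gT -> k}) :
    gmul X Xi = delta k 1%g -> gmul Xi X = delta k 1%g ->
    gmul (tens_1 X) (Delta_id X) = gmul (one_tens X) (id_Delta X) ->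
  twist_cocycle Xi.
Proof.
move=> X_Xi Xi_X X_cocycle.
apply: (gmul_inv_uniq (a := gmul (tens_1 X) (Delta_id X))).
  by apply: gmul_invM; rewrite -?tens_1_gmul -?Delta_id_gmul X_Xi ?tens_1_1 ?Delta_id1.
rewrite X_cocycle; apply: gmul_invM.
  by rewrite -id_Delta_gmul Xi_X id_Delta1.
by rewrite -one_tens_gmul Xi_X one_tens1.
Qed.

Section ConjugatedBasis.
Variables (k : fieldType) (gT hT : finGroupType).
Local Notation alg T := {ffun T -> k}.
Variables (F : gT -> alg hT) (y yi : alg hT) (phi : gT -> hT).
Hypothesis y_yi : gmul y yi = delta k 1%g.
Hypothesis F_phi : forall g, F g = gmul (gmul yi (delta k (phi g))) y.

Lemma conj_basisK a : gmul (gmul y (gmul (gmul yi a) y)) yi = a.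
Proof. by rewrite !gmulA (gmulKr y_yi) y_yi gmul1l. Qed.

Lemma applyL_conj_basis a : applyL F a = gmul (gmul yi (push phi a)) y.
Proof. by rewrite /push gmul_applyLr gmul_applyLl; apply: eq_applyL => g; rewrite F_phi. Qed.

Lemma conj_basis_morph :
  (forall a b, applyL F (gmul a b) = gmul (applyL F a) (applyL F b)) ->
  {morph phi : x x' / (x * x')%g}.
Proof.
move=> f_mul x x'; apply/(@delta_inj k).
have := f_mul (delta k x) (delta k x'); rewrite gmul_delta !applyL_delta !F_phi.
rewrite [X in _ = X]gmulA [gmul (gmul (gmul yi _) y) _]gmulA (gmulKr y_yi).
rewrite -[gmul (gmul yi (delta k (phi x))) _]gmulA gmul_delta.
by move/(congr1 (fun a => gmul (gmul y a) yi)); rewrite !conj_basisK.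
Qed.

Lemma conj_basis_bij : bijective (applyL F) -> bijective phi.
Proof.
move=> [finv fK Kf].
have phi_inj : injective phi.
  move=> x x' phix; apply/(@delta_inj k)/(can_inj fK).
  by rewrite !applyL_delta !F_phi phix.
have phi_surj h : exists g, phi g = h.
  have := Kf (gmul (gmul yi (delta k h)) y).
  rewrite applyL_conj_basis => /(congr1 (fun a => gmul (gmul y a) yi)).
  rewrite !conj_basisK => /ffunP/(_ h); rewrite pushE deltaE eqxx.
  case: (pickP (fun g => phi g == h)) => [g /eqP <- | phi_h]; first by exists g.
  by rewrite big_pred0 // => /eqP; rewrite eq_sym oner_eq0.
have [psi psiK] := fin_all_exists phi_surj.
by exists psi => [g | h]; [apply: phi_inj; rewrite psiK | apply: psiK].
Qed.

End ConjugatedBasis.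

Section TwistIsomorphism.
Variables (k : fieldType) (gT hT : finGroupType).
Local Notation alg T := {ffun T -> k}.
Variables (J Ji : alg (gT * gT)) (J' Ji' : alg (hT * hT)) (F : gT -> alg hT).
Hypotheses (J_cocycle : twist_cocycle J) (J_counit : id_eps J = delta k 1%g).
Hypotheses (J_Ji : gmul J Ji = delta k 1%g) (Ji_J : gmul Ji J = delta k 1%g).
Hypotheses (J'_cocycle : twist_cocycle J') (J'_counit : id_eps J' = delta k 1%g).
Hypotheses (J'_Ji' : gmul J' Ji' = delta k 1%g) (Ji'_J' : gmul Ji' J' = delta k 1%g).
Hypothesis f_mul : forall a b, applyL F (gmul a b) = gmul (applyL F a) (applyL F b).
Hypothesis f_1 : applyL F (delta k 1%g) = delta k 1%g.
Hypothesis f_eps : forall a, eps (applyL F a) = eps a.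
Hypothesis f_Delta : forall a, applyL2 F (DeltaJ J Ji a) = DeltaJ J' Ji' (applyL F a).
Hypothesis f_R : applyL2 F (Rmat J Ji) = Rmat J' Ji'.
Hypothesis f_bij : bijective (applyL F).

Lemma F_mul g h : F (g * h)%g = gmul (F g) (F h).
Proof. by rewrite -!(applyL_delta F) -gmul_delta f_mul. Qed.

Lemma F_1 : F 1%g = delta k 1%g.
Proof. by rewrite -f_1 applyL_delta. Qed.

Lemma F_eps g : eps (F g) = 1.
Proof. by rewrite -(applyL_delta F) f_eps eps_delta. Qed.

Definition F2 (p : gT * gT) := tens (F p.1) (F p.2).

Lemma applyL2E X : applyL2 F X = applyL F2 X.
Proof. by apply/ffunP => q; rewrite !ffunE; apply: eq_bigr => p _; rewrite ffunE mulrA. Qed.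

Lemma F2_mul p q : F2 (p * q)%g = gmul (F2 p) (F2 q).
Proof. by rewrite /F2 tens_gmul -!F_mul. Qed.

Lemma F2_gmul X Y : applyL F2 (gmul X Y) = gmul (applyL F2 X) (applyL F2 Y).
Proof. by apply: applyL_gmul => p q; apply: F2_mul. Qed.

Lemma F2_1 : applyL F2 (delta k 1%g) = delta k 1%g.
Proof. by rewrite applyL_delta /F2 /= F_1 tens_delta. Qed.

Definition K := applyL F2 J.
Definition Ki := applyL F2 Ji.
(* Locked, so that rewriting with gmulA cannot see through these products. *)
Definition L := locked (gmul K Ji').
Definition Li := locked (gmul J' Ki).

Lemma LE : L = gmul K Ji'. Proof. by rewrite /L -lock. Qed.
Lemma LiE : Li = gmul J' Ki. Proof. by rewrite /Li -lock. Qed.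

Lemma K_Ki : gmul K Ki = delta k 1%g. Proof. by rewrite -F2_gmul J_Ji F2_1. Qed.
Lemma Ki_K : gmul Ki K = delta k 1%g. Proof. by rewrite -F2_gmul Ji_J F2_1. Qed.
Lemma L_Li : gmul L Li = delta k 1%g. Proof. by rewrite LE LiE -gmulA (gmulKl Ji'_J') K_Ki. Qed.
Lemma Li_L : gmul Li L = delta k 1%g. Proof. by rewrite LE LiE -gmulA (gmulKl Ki_K) J'_Ji'. Qed.
Lemma Li_K : gmul Li K = J'. Proof. by rewrite LiE -gmulA Ki_K gmul1r. Qed.

Lemma L_J' : gmul L J' = K. Proof. by rewrite LE (gmulKr Ji'_J'). Qed.

Lemma Delta_F g : Delta (F g) = gmul (gmul Li (tens (F g) (F g))) L.
Proof.
have := f_Delta (delta k g); rewrite applyL2E /DeltaJ !F2_gmul Delta_delta !applyL_delta.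
move=> /(congr1 (fun X => gmul (gmul J' X) Ji')).
by rewrite !gmulA J'_Ji' gmul1l (gmulKr J'_Ji') => <-; rewrite LE LiE gmulA.
Qed.

Lemma F2_flip X : applyL F2 (flip X) = flip (applyL F2 X).
Proof.
rewrite !flip_push /push !applyL_comp; apply: eq_applyL => p.
by rewrite applyL_delta -/(push _ _) -flip_push flip_tens.
Qed.

Lemma L_sym : flip L = L.
Proof.
have R_eq : gmul (flip Ki) K = gmul (flip Ji') J'.
  by rewrite /Ki -F2_flip -F2_gmul -applyL2E; apply: f_R.
have fK_fKi : gmul (flip K) (flip Ki) = delta k 1%g.
  by rewrite -flip_gmul K_Ki flip_delta.
have K_eq : K = gmul (flip K) (gmul (flip Ji') J') by rewrite -R_eq (gmulKl fK_fKi).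
by rewrite LE flip_gmul [in RHS]K_eq gmulA (gmulKr J'_Ji').
Qed.

Lemma Li_sym : flip Li = Li.
Proof.
apply/esym/(gmul_inv_uniq L_Li).
by rewrite -[L in LHS]L_sym -flip_gmul Li_L flip_delta.
Qed.

Lemma Ji_counit : id_eps Ji = delta k 1%g.
Proof. by rewrite -[id_eps Ji]gmul1l -J_counit -id_eps_gmul J_Ji id_eps_push push_delta. Qed.

Lemma F2_id_eps X : id_eps (applyL F2 X) = applyL F (id_eps X).
Proof.
rewrite !id_eps_push /push !applyL_comp; apply: eq_applyL => p.
by rewrite applyL_delta -/(push _ _) -id_eps_push id_eps_tens ?F_eps.
Qed.

Lemma Li_counit : id_eps Li = delta k 1%g.
Proof. by rewrite LiE id_eps_gmul J'_counit F2_id_eps Ji_counit f_1 gmul1l. Qed.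

Lemma Delta_F_conj g : gmul (gmul L (Delta (F g))) Li = tens (F g) (F g).
Proof. by rewrite Delta_F !gmulA L_Li gmul1l (gmulKr L_Li). Qed.

Definition F3 (t : gT * gT * gT) := tensor (F2 t.1) (F t.2).

Lemma F3_gmul X Y : applyL F3 (gmul X Y) = gmul (applyL F3 X) (applyL F3 Y).
Proof. by apply: applyL_gmul => s t; rewrite /F3 tensor_gmul -F2_mul -F_mul. Qed.

Lemma F3_Delta_id X :
  applyL F3 (Delta_id X) = gmul (gmul (tens_1 L) (Delta_id (applyL F2 X))) (tens_1 Li).
Proof.
rewrite !Delta_id_push /push !applyL_comp gmul_applyLr gmul_applyLl.
apply: eq_applyL => p; rewrite applyL_delta -/(push _ _) -Delta_id_push Delta_id_tens.
by rewrite !tens_1E !tensor_gmul Delta_F_conj gmul1l gmul1r.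
Qed.

Lemma F3_id_Delta X :
  applyL F3 (id_Delta X) = gmul (gmul (one_tens L) (id_Delta (applyL F2 X))) (one_tens Li).
Proof.
rewrite !id_Delta_push /push !applyL_comp gmul_applyLr gmul_applyLl.
apply: eq_applyL => p; rewrite applyL_delta -/(push _ _) -id_Delta_push id_Delta_tens.
by rewrite !one_tensE !tens12_gmul Delta_F_conj gmul1l gmul1r /F3 tensor_tens.
Qed.

Lemma F3_tens_1 X : applyL F3 (tens_1 X) = tens_1 (applyL F2 X).
Proof.
rewrite !tens_1_push /push !applyL_comp; apply: eq_applyL => p.
by rewrite !applyL_delta -/(push _ _) -tens_1_push tens_1E /F3 /= F_1.
Qed.

Lemma F3_one_tens X : applyL F3 (one_tens X) = one_tens (applyL F2 X).
Proof.
rewrite !one_tens_push /push !applyL_comp; apply: eq_applyL => p.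
by rewrite !applyL_delta -/(push _ _) -one_tens_push one_tensE /F3 /F2 /= F_1 tensor_tens.
Qed.

Lemma L_cocycle : gmul (tens_1 L) (Delta_id L) = gmul (one_tens L) (id_Delta L).
Proof.
have := congr1 (applyL F3) J_cocycle.
rewrite !F3_gmul F3_Delta_id F3_id_Delta F3_tens_1 F3_one_tens -/K -!gmulA.
rewrite -tens_1_gmul -one_tens_gmul Li_K -L_J' Delta_id_gmul id_Delta_gmul !gmulA.
rewrite -[X in X = _ -> _]gmulA -[X in _ = X -> _]gmulA -J'_cocycle.
apply: (gmulI (b := gmul (tens_1 Ji') (Delta_id Ji'))); apply: gmul_invM.
  by rewrite -Delta_id_gmul J'_Ji' Delta_id1.
by rewrite -tens_1_gmul J'_Ji' tens_1_1.
Qed.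

Lemma Li_cocycle : twist_cocycle Li.
Proof. exact: twist_cocycle_inv L_Li Li_L L_cocycle. Qed.

Section Gauge.
Variables (y yi : alg hT).
Hypotheses (y_yi : gmul y yi = delta k 1%g) (yi_y : gmul yi y = delta k 1%g).
Hypotheses (y_counit : eps y = 1) (Dy : gmul (Delta y) Li = tens y y).

Lemma yi_counit : eps yi = 1.
Proof. by have := eps_gmul y yi; rewrite y_yi eps_delta y_counit mul1r. Qed.

Lemma tens_y_yi : gmul (tens y y) (tens yi yi) = delta k 1%g.
Proof. by rewrite tens_gmul y_yi tens_delta. Qed.

Lemma Delta_yi : gmul L (Delta yi) = tens yi yi.
Proof.
apply/esym/(gmul_inv_uniq tens_y_yi).
by rewrite -Dy -gmulA [gmul (Delta yi) _]gmulA -Delta_gmul yi_y Delta_delta gmul1l L_Li.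
Qed.

Lemma conj_F_grouplike g :
  Delta (gmul (gmul y (F g)) yi) = tens (gmul (gmul y (F g)) yi) (gmul (gmul y (F g)) yi).
Proof. by rewrite !Delta_gmul Delta_F -!tens_gmul -Dy -Delta_yi !gmulA. Qed.

Lemma F_conj_basis : exists phi : gT -> hT, forall g, F g = gmul (gmul yi (delta k (phi g))) y.
Proof.
have grouplike g : exists h, gmul (gmul y (F g)) yi = delta k h.
  apply: grouplike_delta (conj_F_grouplike g) _.
  by rewrite !eps_gmul y_counit F_eps yi_counit !mul1r.
have [phi phiP] := fin_all_exists grouplike.
by exists phi => g; rewrite -phiP !gmulA (gmulKr yi_y) yi_y gmul1l.
Qed.

Lemma push2_gauge (phi : gT -> hT) :
  (forall g, F g = gmul (gmul yi (delta k (phi g))) y) ->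
  J' = gmul (gmul (Delta yi) (push2 phi J)) (tens y y).
Proof.
move=> F_phi.
have pushE2 : push2 phi J = push (fun p => (phi p.1, phi p.2)) J.
  by apply/ffunP => q; rewrite pushE ffunE.
have KE : K = gmul (gmul (tens yi yi) (push2 phi J)) (tens y y).
  rewrite pushE2 /push gmul_applyLr gmul_applyLl; apply: eq_applyL => p.
  by rewrite /F2 !F_phi -!tens_gmul tens_delta.
have LiE' : Li = gmul (Delta yi) (tens y y).
  by rewrite -Dy gmulA -Delta_gmul yi_y Delta_delta gmul1l.
by rewrite -Li_K LiE' KE !gmulA (gmulKr tens_y_yi).
Qed.

End Gauge.

Hypothesis symmetric_twist_trivial : forall M : alg (hT * hT),
  flip M = M -> id_eps M = delta k 1%g -> twist_cocycle M ->
  exists y, gmul (Delta y) M = tens y y /\ eps y = 1.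

Lemma twist_iso_gauge_equiv : exists phi : gT -> hT,
  bijective phi /\ {morph phi : x x' / (x * x')%g} /\ gauge_equiv (push2 phi J) J'.
Proof.
have [y [Dy y_counit]] := symmetric_twist_trivial Li_sym Li_counit Li_cocycle.
have y_yi : gmul y (gmul (mulS L) (antipode y)) = delta k 1%g.
  by apply: coboundary_inv => //; rewrite -Dy (gmulKr Li_L).
have yi_y := gmul_eq1C y_yi.
have [phi F_phi] := F_conj_basis y_yi yi_y y_counit Dy.
exists phi; split; first exact: conj_basis_bij y_yi F_phi f_bij.
split; first exact: conj_basis_morph y_yi F_phi f_mul.
exists (gmul (mulS L) (antipode y)), y; split; first by [].
by split; [apply: yi_counit y_yi y_counit | apply: push2_gauge].
Qed.

End TwistIsomorphism.

Theorem lemma5p7 (k : closedFieldType) (gT hT : finGroupType)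
  (J Ji : {ffun gT * gT -> k}) (J' Ji' : {ffun hT * hT -> k}) :
  [pchar k]%R =i pred0 ->
  is_twist J -> is_inv (@mul2 gT) (1%g, 1%g) J Ji ->
  is_twist J' -> is_inv (@mul2 hT) (1%g, 1%g) J' Ji' ->
  (exists F : gT -> {ffun hT -> k}, tri_hopf_iso J Ji J' Ji' F) ->
  exists phi : gT -> hT,
    bijective phi /\ {morph phi : x y / (x * y)%g} /\
    gauge_equiv (push2 phi J) J'.
Proof.
move=> _ [_ [J_cocycle [_ J_counit]]] [J_Ji Ji_J] [_ [J'_cocycle [_ J'_counit]]] [J'_Ji' Ji'_J'].
move=> [F [f_bij [f_mul [f_1 [f_eps [f_Delta [_ f_R]]]]]]].
apply: (twist_iso_gauge_equiv J_cocycle J_counit J_Ji Ji_J J'_cocycle J'_counit J'_Ji' Ji'_J'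
  f_mul f_1 f_eps f_Delta f_R f_bij).
exact: symmetric_twist_coboundary.
Qed.
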